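(* Suppose $(\eta,\omega_G)$, with $\eta(0)\in\operatorname{im}B^T$, is a solution of \[ \dot\eta=B_S^T\omega_G,\qquad M\dot\omega_G=-A\omega_G-B_G\Gamma\eta+u . \] Define $\eta_S=\Pi^T\eta$ with $\Pi=I-\Gamma B_L^T(B_L\Gamma B_L^T)^{-1}B_L$. Then $(\eta_S,\omega_G)$ is a solution of \[ \dot\eta_S=B_S^T\omega_G,\qquad M\dot\omega_G=-A\omega_G-B_S\Gamma\eta_S+u-\hat p, \] where $\hat p=B_G\Gamma B_L^T(B_L\Gamma B_L^T)^{-1}p^\ast$ and $p^\ast=B_L\Gamma\eta(t)$ (a constant vector, conserved along the solution).
   Context: A connected undirected graph with $n$ nodes and $m$ edges, nodes partitioned into $n_g$ generator and $n_\ell$ load nodes; $B$ is an incidence matrix partitioned row-wise as $B=\begin{bmatrix}B_G^T & B_L^T\end{bmatrix}^T$. $\Gamma=\mathrm{diag}(\gamma_k)$ is positive definite (constant), $M,A$ positive definite diagonal, $u\in\mathbb{R}^{n_g}$. Here $B_S$ is the constant projected incidence matrix $B_S=B_G\big(I-\Gamma B_L^T(B_L\Gamma B_L^T)^{-1}B_L\big)$. The first system is obtained from the nonlinear reduced model by neglecting the state dependence of $B_S$ and replacing $\sin(\eta)$ by $\eta$. *)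

From mathcomp Require Import all_boot all_order all_algebra.
From mathcomp Require Import reals topology normedtype derive.
Import GRing.Theory Num.Theory.
Set Implicit Arguments. Unset Strict Implicit. Unset Printing Implicit Defensive.
Local Open Scope ring_scope.

Section PowerGrid.
Variable R : realType.

Definition is_incidence (n m : nat) (B : 'M[R]_(n, m)) : Prop :=
  forall k : 'I_m, exists i j : 'I_n,
    [/\ i != j, B i k = 1, B j k = -1 &
        forall l : 'I_n, l != i -> l != j -> B l k = 0].

Definition inc_adj (n m : nat) (B : 'M[R]_(n, m)) : rel 'I_n :=
  fun i j => (i != j) && [exists k : 'I_m, (B i k != 0) && (B j k != 0)].

Definition graph_connected (n m : nat) (B : 'M[R]_(n, m)) : Prop :=
  forall i j : 'I_n, connect (inc_adj B) i j.

Definition projPi (nl m : nat) (Gam : 'M[R]_m) (BL : 'M[R]_(nl, m)) : 'M[R]_m :=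
  1%:M - Gam *m BL^T *m invmx (BL *m Gam *m BL^T) *m BL.

Definition projBS (ng nl m : nat) (Gam : 'M[R]_m) (BG : 'M[R]_(ng, m))
  (BL : 'M[R]_(nl, m)) : 'M[R]_(ng, m) := BG *m projPi Gam BL.

End PowerGrid.

(* [B_L Gamma B_L^T] is invertible: a vector [v] in its left kernel satisfies
   [v B_L = 0], so the node potential [(0, v)] is killed by [B], hence constant
   on the connected graph, and it vanishes at a generator.  Writing [P = Pi],
   [P Gamma B_L^T = 0] and [P] is idempotent, so [d/dt (B_L Gamma eta) =
   B_L Gamma P^T B_G^T omega = 0] (conservation of [p*]), [P^T B_S^T = B_S^T]
   gives the equation for [eta_S], and the splitting
   [Gamma = P Gamma P^T + Gamma B_L^T (B_L Gamma B_L^T)^-1 B_L Gamma]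
   turns [B_G Gamma eta] into [B_S Gamma eta_S + phat]. *)

From mathcomp Require Import all_boot all_order all_algebra.
From mathcomp Require Import boolp functions reals topology normedtype derive realfun.
Import Order.TTheory GRing.Theory Num.Theory.
Local Open Scope ring_scope.

Section matrix_derivative.
Context {R : realType} {V : normedModType R}.

Lemma is_derive_mxP {m n : nat} (M : V -> 'M[R]_(m, n)) (x v : V) dM :
  is_derive x v M dM <-> forall i j, is_derive x v (fun t => M t i j : R^o) (dM i j : R^o).
Proof.
split=> [[dM_ex <-] i j | dMij].
  have /derivable_mxP/(_ i j) dMij_ex := dM_ex.
  by apply: DeriveDef => //; rewrite derive_mx // mxE.
have dM_ex : derivable M x v by apply/derivable_mxP => i j; case: (dMij i j).
apply: DeriveDef => //; rewrite derive_mx //; apply/matrixP => i j.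
by rewrite mxE derive_val.
Qed.

Lemma is_derive_mulmx {m n p : nat} (A : 'M[R]_(m, n)) {M : V -> 'M[R]_(n, p)}
    {x v : V} {dM} :
  is_derive x v M dM -> is_derive x v (fun t => A *m M t) (A *m dM).
Proof.
move=> /is_derive_mxP dMij; apply/is_derive_mxP => i j.
have -> : (fun t => (A *m M t) i j : R^o) =
    \sum_k (fun t => A i k *: (M t k j : R^o)).
  by apply/funext => t; rewrite fct_sumE mxE.
rewrite mxE; exact: is_derive_sum.
Qed.

End matrix_derivative.

Lemma is_derive_0_is_cst_mx {R : realType} {m n : nat} (M : R^o -> 'M[R]_(m, n))
    (s t : R) :
  (forall t : R^o, is_derive t (1 : R^o) M 0) -> M s = M t.
Proof.
move=> dM0; apply/matrixP => i j.
apply: (is_derive_0_is_cst (f := fun r => M r i j)) => r.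
by have /is_derive_mxP/(_ i j) := dM0 r; rewrite mxE.
Qed.

Section incidence.
Context {R : realType} {n m : nat} {B : 'M[R]_(n, m)}.

Lemma mulmx_incidence_edge (z : 'rV[R]_n) {k i j} :
  i != j -> B i k = 1 -> B j k = -1 ->
  (forall l : 'I_n, l != i -> l != j -> B l k = 0) ->
  (z *m B) 0 k = z 0 i - z 0 j.
Proof.
move=> ij Bi Bj Bl; rewrite mxE (bigD1 i) //= (bigD1 j) /=; last by rewrite eq_sym.
rewrite big1 ?addr0 => [|l /andP[li lj]]; last by rewrite Bl ?mulr0.
by rewrite Bi Bj mulr1 mulrN1.
Qed.

Hypotheses (B_inc : is_incidence B) (B_conn : graph_connected B).

Lemma incidence_left_kernel_cst (z : 'rV[R]_n) a b :
  z *m B = 0 -> z 0 a = z 0 b.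
Proof.
move=> zB0.
have zcst : fingraph.closed (inc_adj B) [pred c | z 0 c == z 0 a].
  move=> c d /andP[_ /existsP[k /andP[Bc Bd]]] /=.
  have [i [j [ij Bi Bj Bl]]] := B_inc k.
  have zij : z 0 i = z 0 j.
    by apply/eqP; rewrite -subr_eq0 -(mulmx_incidence_edge z ij Bi Bj Bl) zB0 mxE.
  have endpoint l : B l k != 0 -> z 0 l = z 0 i.
    apply: contraNeq => zli; apply/eqP/Bl; apply: contraNneq zli => ->//.
    by rewrite zij.
  by rewrite !inE (endpoint c) // (endpoint d).
by have := closed_connect zcst (B_conn a b); rewrite !inE eqxx => /esym/eqP.
Qed.

End incidence.

Lemma diag_form_eq0 (R : realType) (m : nat) (gam : 'rV[R]_m) (w : 'rV[R]_m) :
  (forall k, 0 < gam 0 k) -> w *m diag_mx gam *m w^T = 0 -> w = 0.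
Proof.
move=> gam_gt0 /matrixP/(_ 0 0); rewrite !mxE => form0.
have term_ge0 k : true -> 0 <= (w *m diag_mx gam) 0 k * w^T k 0.
  by move=> _; rewrite mul_mx_diag !mxE mulrAC -expr2 mulr_ge0 ?sqr_ge0 ?ltW.
apply/rowP => k; have := psumr_eq0P term_ge0 form0 (i := k) isT.
rewrite mul_mx_diag !mxE mulrAC -expr2 => /eqP.
by rewrite mulf_eq0 sqrf_eq0 (gt_eqF (gam_gt0 k)) orbF => /eqP ->.
Qed.

Lemma unitmx_load_laplacian (R : realType) (ng nl m : nat)
    (B : 'M[R]_(ng + nl, m)) (gam : 'rV[R]_m) :
  (0 < ng)%N -> is_incidence B -> graph_connected B -> (forall k, 0 < gam 0 k) ->
  dsubmx B *m diag_mx gam *m (dsubmx B)^T \in unitmx.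
Proof.
move=> ng_gt0 B_inc B_conn gam_gt0.
rewrite -row_free_unit; apply/inj_row_free => v vX0.
have vBL0 : v *m dsubmx B = 0.
  apply: (@diag_form_eq0 _ _ gam) => //.
  suff -> : v *m dsubmx B *m diag_mx gam *m (v *m dsubmx B)^T =
            v *m (dsubmx B *m diag_mx gam *m (dsubmx B)^T) *m v^T.
    by rewrite vX0 mul0mx.
  by rewrite trmx_mul !mulmxA.
pose z := row_mx (0 : 'rV_ng) v.
have zB0 : z *m B = 0 by rewrite -(vsubmxK B) mul_row_col mul0mx add0r vBL0.
apply/rowP => l.
have := incidence_left_kernel_cst B_inc B_conn z
  (lshift nl (Ordinal ng_gt0)) (rshift ng l) zB0.
by rewrite row_mxEl row_mxEr !mxE.
Qed.

Section projection.
Context {R : realType} {nl m : nat} {Gam : 'M[R]_m} {BL : 'M[R]_(nl, m)}.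
Hypotheses (Gam_sym : Gam^T = Gam) (X_unit : BL *m Gam *m BL^T \in unitmx).

Local Notation P := (projPi Gam BL).
Local Notation Xi := (invmx (BL *m Gam *m BL^T)).

Lemma projPi_Gam_trBL : P *m Gam *m BL^T = 0.
Proof.
rewrite /projPi !mulmxBl mul1mx.
suff -> : Gam *m BL^T *m Xi *m BL *m Gam *m BL^T =
          Gam *m BL^T *m (Xi *m (BL *m Gam *m BL^T)) by rewrite mulVmx // mulmx1 subrr.
by rewrite !mulmxA.
Qed.

Lemma BL_Gam_trprojPi : BL *m Gam *m P^T = 0.
Proof.
by apply: trmx_inj; rewrite !trmx_mul trmxK Gam_sym mulmxA projPi_Gam_trBL trmx0.
Qed.

Lemma projPi_idem : P *m P = P.
Proof.
by rewrite {2}/projPi mulmxBr mulmx1 !mulmxA projPi_Gam_trBL !mul0mx subr0.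
Qed.

Lemma trprojPi_idem : P^T *m P^T = P^T.
Proof. by rewrite -trmx_mul projPi_idem. Qed.

Lemma Gam_decomp : P *m Gam *m P^T + Gam *m BL^T *m Xi *m BL *m Gam = Gam.
Proof.
have -> : P *m Gam *m P^T = P *m Gam.
  rewrite {2}/projPi linearB /= trmx1 mulmxBr mulmx1 !trmx_mul !mulmxA.
  by rewrite projPi_Gam_trBL !mul0mx subr0.
by rewrite /projPi mulmxBl mul1mx subrK.
Qed.

End projection.

Theorem proposition4 (R : realType) (ng nl m : nat)
  (B : 'M[R]_(ng + nl, m)) (gam : 'rV[R]_m) (mv av : 'rV[R]_ng)
  (u : 'cV[R]_ng) (eta : R -> 'cV[R]_m) (omega domega : R -> 'cV[R]_ng) :
  (0 < ng)%N ->
  is_incidence B -> graph_connected B ->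
  (forall k, 0 < gam 0 k) -> (forall i, 0 < mv 0 i) -> (forall i, 0 < av 0 i) ->
  (exists x : 'cV[R]_(ng + nl), eta 0 = B^T *m x) ->
  (forall t : R, is_derive (t : R^o) (1 : R^o) eta
     ((projBS (diag_mx gam) (usubmx B) (dsubmx B))^T *m omega t)) ->
  (forall t : R, is_derive (t : R^o) (1 : R^o) omega (domega t)) ->
  (forall t : R, diag_mx mv *m domega t =
     - (diag_mx av *m omega t) - usubmx B *m diag_mx gam *m eta t + u) ->
  let Gam := diag_mx gam in
  let BG := usubmx B in
  let BL := dsubmx B in
  let BS := projBS Gam BG BL in
  let etaS := fun t : R => (projPi Gam BL)^T *m eta t in
  exists pstar : 'cV[R]_nl,
    (forall t : R, BL *m Gam *m eta t = pstar) /\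
    let phat := BG *m Gam *m BL^T *m invmx (BL *m Gam *m BL^T) *m pstar in
    forall t : R,
      is_derive (t : R^o) (1 : R^o) etaS (BS^T *m omega t) /\
      diag_mx mv *m domega t =
        - (diag_mx av *m omega t) - BS *m Gam *m etaS t + u - phat.
Proof.
move=> ng_gt0 B_inc B_conn gam_gt0 _ _ _ eta_der _ dyn Gam BG BL BS etaS.
have X_unit : BL *m Gam *m BL^T \in unitmx by exact: unitmx_load_laplacian.
have Gam_sym : Gam^T = Gam by rewrite tr_diag_mx.
have trBS : BS^T = (projPi Gam BL)^T *m BG^T by rewrite trmx_mul.
have pstar_cst t : BL *m Gam *m eta t = BL *m Gam *m eta 0.
  apply: (is_derive_0_is_cst_mx (fun s => BL *m Gam *m eta s)) => s.
  apply: is_derive_eq (is_derive_mulmx _ (eta_der s)) _.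
  by rewrite -/BS trBS !mulmxA (BL_Gam_trprojPi Gam_sym X_unit) !mul0mx.
exists (BL *m Gam *m eta 0); split => // phat t; split.
  apply: is_derive_eq (is_derive_mulmx _ (eta_der t)) _.
  by rewrite -/BS trBS !mulmxA (trprojPi_idem X_unit).
have BG_Gam_eta : BG *m Gam *m eta t = BS *m Gam *m etaS t + phat.
  rewrite /phat -(pstar_cst t) /etaS /BS /projBS -[in LHS](Gam_decomp X_unit).
  by rewrite mulmxDr mulmxDl !mulmxA.
by rewrite dyn BG_Gam_eta opprD addrA [_ - phat]addrAC.
Qed.
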